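(* Suppose an SCC $F:\Theta\to 2^Z\setminus\{\emptyset\}$ is mixed-Nash-A-implemented by $\mathcal M=\langle M,g\rangle$. Then $g(M)\subseteq\Delta(Z^* )$.
   Context: Standing setup: $\mathcal I=\{1,\dots,I\}$ finite, $I\ge 3$; $\Theta$ finite or countably infinite; $Z$ finite; $Y=\Delta(Z)$; $u_i^\theta:Z\to\mathbb R$, $U_i^\theta(y)=\sum_zy_zu_i^\theta(z)$. A mechanism $\mathcal M=\langle M=\times_iM_i,g:M\to Y\rangle$ has countable $M_i$; $g(\lambda)$ is the induced lottery; $MNE^{(\mathcal M,\theta)}$ is the set of mixed Nash equilibria at $\theta$. $F$ is mixed-Nash-A-implemented by $\mathcal M$ if $\bigcup_{\lambda\in MNE^{(\mathcal M,\theta)}}\mathrm{SUPP}(g[\lambda])=F(\theta)$ for all $\theta$. A nonempty $E\subseteq Z$ is an $i$-$\theta$-max set if $E\subseteq\arg\max_{z\in E}u_i^\theta(z)$ and $E\subseteq\arg\max_{z\in Z}u_j^\theta(z)$ for all $j\ne i$; an $i$-max set if it is such for some $\theta$. $Z^*=\bigcup_{\theta\in\Theta}F(\theta)$ if $Z$ is an $i$-max set for some $i\in\mathcal I$, and $Z^*=Z$ otherwise. *)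

From HB Require Import structures.
From mathcomp Require Import all_boot all_order all_algebra.
From mathcomp Require Import boolp classical_sets reals ereal esum.
Set Implicit Arguments.
Unset Strict Implicit.
Unset Printing Implicit Defensive.
Import Order.TTheory GRing.Theory Num.Theory.
Local Open Scope ring_scope.

Section Defs.
Variables (R : realType) (n : nat) (Theta : countType) (Z : finType).

Definition is_lottery (y : Z -> R) : Prop :=
  (forall z, 0 <= y z) /\ \sum_(z : Z) y z = 1.

Definition expU (u : 'I_n -> Theta -> Z -> R) (i : 'I_n) (th : Theta)
  (y : Z -> R) : R := \sum_(z : Z) y z * u i th z.

Variable (Mi : 'I_n -> countType).
Definition profile := {dffun forall i : 'I_n, Mi i}.

Definition is_mixed (i : 'I_n) (l : Mi i -> R) : Prop :=
  (forall m, 0 <= l m) /\ (esum [set: Mi i] (fun m => (l m)%:E) = 1%E).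

Definition mprofile := forall i : 'I_n, Mi i -> R.

Definition induced (g : profile -> Z -> R) (lam : mprofile) (z : Z) : R :=
  fine (esum [set: profile]
          (fun m => ((\prod_(i < n) lam i (m i)) * g m z)%:E)).

Definition is_MNE (u : 'I_n -> Theta -> Z -> R) (g : profile -> Z -> R)
  (th : Theta) (lam : mprofile) : Prop :=
  (forall i, is_mixed (lam i)) /\
  (forall (i : 'I_n) (mu : Mi i -> R), is_mixed mu ->
     expU u i th (induced g (dfwith lam mu)) <= expU u i th (induced g lam)).

Definition SUPP (y : Z -> R) : {set Z} := [set z | 0 < y z].

Definition mixedNashA_implements (u : 'I_n -> Theta -> Z -> R)
  (F : Theta -> {set Z}) (g : profile -> Z -> R) : Prop :=
  forall th z, (exists lam, is_MNE u g th lam /\ z \in SUPP (induced g lam))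
               <-> z \in F th.
End Defs.

Section MaxSets.
Variables (R : realType) (n : nat) (Theta : countType) (Z : finType).
Variable (u : 'I_n -> Theta -> Z -> R).

Definition is_max_set_at (i : 'I_n) (th : Theta) (E : {set Z}) : Prop :=
  E != finset.set0 /\
  (forall x, x \in E -> forall y, y \in E -> u i th y <= u i th x) /\
  (forall j : 'I_n, j != i -> forall x, x \in E -> forall y : Z,
       u j th y <= u j th x).

Definition is_max_set (i : 'I_n) (E : {set Z}) : Prop :=
  exists th, is_max_set_at i th E.

Definition Zstar (F : Theta -> {set Z}) (z : Z) : Prop :=
  if `[< exists i, is_max_set i (finset.setT : {set Z}) >] then exists th, z \in F th
  else True.
End MaxSets.

(* If [Z] is an [i]-max set at some [theta], then at [theta] every player is
   indifferent between all outcomes, so every pure profile [m] is a mixed Nash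
   equilibrium at [theta].  Its induced lottery is [g m], so implementation
   forces the support of [g m] into [F theta], which is contained in [Z^*].
   When [Z] is not an [i]-max set for any [i], [Z^*] is all of [Z]. *)
From HB Require Import structures.
From mathcomp Require Import all_boot all_order all_algebra.
From mathcomp Require Import boolp classical_sets reals ereal esum.
Import Order.TTheory GRing.Theory Num.Theory.
Local Open Scope ring_scope.

Lemma esum_supported1 (R : realType) (T : choiceType) (t : T)
    (a : T -> \bar R) :
  (forall x, x != t -> a x = 0%E) -> (0 <= a t)%E ->
  esum [set: T] a = a t.
Proof.
move=> a0 at0.
rewrite (esumID [set t]); last first.
  by move=> x _; case: (eqVneq x t) => [->//|/a0 ->].
rewrite setTI esum_set1 // esum1 ?adde0 // => x [_ /=] xt.
by apply: a0; apply/eqP.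
Qed.

Section PureProfile.
Variables (R : realType) (n : nat) (Z : finType) (Mi : 'I_n -> countType).
Variables (g : profile Mi -> Z -> R) (m : profile Mi).
Hypothesis g_ge0 : forall p z, 0 <= g p z.

Definition pure_mixed : mprofile R Mi := fun i x => if x == m i then 1 else 0.

Lemma pure_mixed_ge0 i x : 0 <= pure_mixed i x.
Proof. by rewrite /pure_mixed; case: ifP. Qed.

Lemma is_mixed_pure i : is_mixed (pure_mixed i).
Proof.
split; first exact: pure_mixed_ge0.
rewrite (@esum_supported1 _ _ (m i)); first by rewrite /pure_mixed eqxx.
  by move=> x xm; rewrite /pure_mixed (negPf xm).
by rewrite lee_fin pure_mixed_ge0.
Qed.

Definition profile_with (i : 'I_n) (x : Mi i) : profile Mi :=
  [ffun j => dfwith (fun j => m j) x j].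
Arguments profile_with {i}.

Lemma profile_with_in {i} (x : Mi i) : profile_with x i = x.
Proof. by rewrite /profile_with ffunE dfwith_in. Qed.

Lemma profile_with_out i (x : Mi i) j : i != j -> profile_with x j = m j.
Proof. by move=> ij; rewrite /profile_with ffunE dfwith_out. Qed.

Lemma range_profile_with i (p : profile Mi) :
  (forall k, k != i -> p k = m k) -> p = profile_with (p i).
Proof.
move=> pm; apply/ffunP => j; case: (eqVneq i j) => [<-|ij].
  by rewrite profile_with_in.
by rewrite profile_with_out // pm // eq_sym.
Qed.

(* When only player [i] may mix, the sum over profiles collapses onto the
   image of [profile_with], which is a copy of [Mi i]. *)
Lemma esum_unilateral (i : 'I_n) (lam : mprofile R Mi) z :
  (forall x, 0 <= lam i x) -> (forall k, k != i -> lam k = pure_mixed k) ->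
  esum [set: profile Mi] (fun p => ((\prod_(k < n) lam k (p k)) * g p z)%:E) =
  esum [set: Mi i] (fun x => (lam i x * g (profile_with x) z)%:E).
Proof.
move=> lam_i_ge0 lam_pure.
have lam_ge0 k : forall y, 0 <= lam k y.
  case: (eqVneq k i) => [->|/lam_pure ->]; first exact: lam_i_ge0.
  exact: pure_mixed_ge0.
rewrite (esumID (range (@profile_with i))); last first.
  by move=> p _; rewrite lee_fin mulr_ge0 // prodr_ge0.
rewrite [X in (_ + X)%E]esum1 ?adde0; last first.
  move=> p [_ /= p_out].
  have [k [ki pk]] : exists k, k != i /\ p k != m k.
    apply: contrapT => p_eq; apply: p_out; exists (p i) => //.
    apply/esym/range_profile_with => k ki; apply/eqP/negPn/negP => pk.
    by apply: p_eq; exists k; split.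
  by rewrite (bigD1 k) //= lam_pure // /pure_mixed (negPf pk) !mul0r.
rewrite setTI esum_image; last first.
  by move=> x y _ _ e; rewrite -(profile_with_in x) -(profile_with_in y) e.
apply: eq_esum => x _; congr (_ * _)%:E.
rewrite (bigD1 i) //= profile_with_in big1 ?mulr1 // => k ki.
by rewrite lam_pure // profile_with_out 1?eq_sym // /pure_mixed eqxx.
Qed.

Lemma prod_pure_mixed (p : profile Mi) :
  \prod_(k < n) pure_mixed k (p k) = (p == m)%:R.
Proof.
case: (eqVneq p m) => [->|pm].
  by rewrite big1 // => k _; rewrite /pure_mixed eqxx.
have [k pk] : exists k, p k != m k.
  apply: contrapT => p_eq; apply/negP: pm; apply/negPn/eqP/ffunP => k.
  by apply/eqP/negPn/negP => pk; apply: p_eq; exists k.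
by rewrite (bigD1 k) //= /pure_mixed (negPf pk) mul0r.
Qed.

Lemma induced_pure z : induced g pure_mixed z = g m z.
Proof.
rewrite /induced (@esum_supported1 _ _ m) /=.
- by rewrite prod_pure_mixed eqxx mul1r.
- by move=> p pm; rewrite prod_pure_mixed (negPf pm) mul0r.
- by rewrite prod_pure_mixed eqxx mul1r lee_fin.
Qed.

Hypothesis g_sum1 : forall p, \sum_(z : Z) g p z = 1.

Lemma g_le1 p z : g p z <= 1.
Proof. by rewrite -(g_sum1 p) (bigD1 z) //= lerDl sumr_ge0. Qed.

Lemma sum_induced_unilateral (i : 'I_n) (mu : Mi i -> R) : is_mixed mu ->
  \sum_(z : Z) induced g (dfwith pure_mixed mu) z = 1.
Proof.
move=> [mu_ge0 mu_sum1].
have induced_esum z : induced g (dfwith pure_mixed mu) z =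
    fine (esum [set: Mi i] (fun x => (mu x * g (profile_with x) z)%:E)).
  rewrite /induced (@esum_unilateral i).
  - by congr fine; apply: eq_esum => x _; rewrite dfwith_in.
  - by move=> x; rewrite dfwith_in.
  - by move=> k ki; rewrite dfwith_out // eq_sym.
under eq_bigr do rewrite induced_esum.
apply: EFin_inj; rewrite EFin_sum_fine; last first.
  move=> z _; rewrite ge0_fin_numE; last first.
    by apply: esum_ge0 => x _; rewrite lee_fin mulr_ge0.
  apply: (@le_lt_trans _ _ 1%E); last by rewrite ltry.
  rewrite -mu_sum1; apply: le_esum => x _.
  by rewrite lee_fin ler_piMr // g_le1.
rewrite -esum_sum; last by move=> x z _ _; rewrite lee_fin mulr_ge0.
rewrite -mu_sum1; apply: eq_esum => x _.
by rewrite sumEFin -mulr_sumr g_sum1 mulr1.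
Qed.

(* With indifferent players, expected utility only sees the total mass of a
   lottery, and every unilateral deviation from a pure profile keeps mass 1. *)
Lemma is_MNE_pure (Theta : countType) (u : 'I_n -> Theta -> Z -> R) th :
  (forall j w w', u j th w = u j th w') -> is_MNE u g th pure_mixed.
Proof.
move=> indiff; split; first exact: is_mixed_pure.
move=> i mu mu_mixed.
have [z0|] := pickP Z; last first.
  by move=> Z0; rewrite /expU !big_pred0.
have expU_mass j y : expU u j th y = (\sum_(w : Z) y w) * u j th z0.
  by rewrite /expU mulr_suml; apply: eq_bigr => w _; rewrite (indiff j w z0).
rewrite !expU_mass sum_induced_unilateral //.
by under eq_bigr do rewrite induced_pure; rewrite g_sum1.
Qed.
End PureProfile.
Arguments pure_mixed {R n Mi} m.

Lemma max_set_setT_indifferent (R : realType) (n : nat) (Theta : countType)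
    (Z : finType) (u : 'I_n -> Theta -> Z -> R) i th :
  is_max_set_at u i th [set: Z] -> forall j w w', u j th w = u j th w'.
Proof.
move=> [_ [max_i max_j]] j w w'.
apply/eqP; rewrite eq_le; case: (eqVneq j i) => [->|ji].
  by rewrite !max_i ?in_setT.
by rewrite !(max_j j ji) ?in_setT.
Qed.

Theorem lemma5 (R : realType) (n : nat) (Theta : countType) (Z : finType)
  (u : 'I_n -> Theta -> Z -> R) (F : Theta -> {set Z})
  (Mi : 'I_n -> countType) (g : profile Mi -> Z -> R) :
  (3 <= n)%N ->
  (forall th, F th != finset.set0) ->
  (forall m, is_lottery (g m)) ->
  mixedNashA_implements u F g ->
  forall (m : profile Mi) (z : Z), 0 < g m z -> Zstar u F z.
Proof.
move=> _ _ g_lottery implements m z gmz.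
rewrite /Zstar; case: asboolP => // -[i [th Zmax]].
have g_ge0 p w : 0 <= g p w by case: (g_lottery p).
have g_sum1 p : \sum_(w : Z) g p w = 1 by case: (g_lottery p).
exists th; apply/(implements th z); exists (pure_mixed m); split.
  exact/is_MNE_pure/max_set_setT_indifferent/Zmax.
by rewrite /SUPP inE induced_pure.
Qed.
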